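(* Let $P$ be a possibilistic positive disjunctive logic program. If $\Gamma_0:=\mathcal T(P)$ and $\Gamma_i:=\mathcal T(\Gamma_{i-1})$ for $i\in\mathbb N$, then there exists $n\in\mathbb N$ such that $\Gamma_n=\Gamma_{n-1}$. (This $\Gamma_n$ is denoted $\Pi(P)$.)
   Context: $(\mathcal Q,\le)$ is a finite lattice; $\mathrm{GLB}$ denotes greatest lower bound. A possibilistic positive disjunctive logic program is a finite set (over a finite set of atoms) of clauses $\alpha:\mathcal A\leftarrow\mathcal B^+$ with $\alpha\in\mathcal Q$, $\mathcal A,\mathcal B^+$ finite sets of atoms; $n(r)=\alpha$. A clause is identified with the triple $(\alpha,\mathcal A,\mathcal B^+)$. G-GPPE: if $r_1=\alpha:\mathcal A\leftarrow\mathcal B^+\cup\{B\}$ and $r_2=\alpha_1:\mathcal A_1$ (empty body) with $B\in\mathcal A_1$ and $B\notin\mathcal B^+$, then $\text{G-GPPE}(r_1,r_2)=(\mathrm{GLB}\{\alpha,\alpha_1\}:\mathcal A\cup(\mathcal A_1\setminus\{B\})\leftarrow\mathcal B^+)$. The operator $\mathcal T(P):=P\cup\{\text{G-GPPE}(r_1,r_2): r_1,r_2\in P \text{ for which it is defined}\}$. *)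

From mathcomp Require Import all_boot all_order.
Set Implicit Arguments. Unset Strict Implicit. Unset Printing Implicit Defensive.
Import Order.TTheory.

(* A possibilistic positive disjunctive clause  alpha : A <- B+  over a finite
   set of atoms At and a finite lattice Q, identified with the triple
   (alpha, A, B+). *)
Definition clause (d : Order.disp_t) (Q : finLatticeType d) (At : finType) :=
  (Q * {set At} * {set At})%type.

Definition program (d : Order.disp_t) (Q : finLatticeType d) (At : finType) :=
  {set clause Q At}.

Definition cl_n d (Q : finLatticeType d) At (r : clause Q At) : Q := r.1.1.
Definition cl_head d (Q : finLatticeType d) At (r : clause Q At) : {set At} := r.1.2.
Definition cl_body d (Q : finLatticeType d) At (r : clause Q At) : {set At} := r.2.

(* gppe r1 r2 b r  <=>  r1 = alpha : A <- B+ u {b} with b \notin B+,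
   r2 = alpha1 : A1 (empty body) with b \in A1, and
   r = GLB{alpha,alpha1} : A u (A1 \ {b}) <- B+ . *)
Definition gppe d (Q : finLatticeType d) At (r1 r2 : clause Q At) (b : At)
  (r : clause Q At) : bool :=
  [&& b \in cl_body r1, cl_body r2 == set0, b \in cl_head r2 &
      r == (Order.meet (cl_n r1) (cl_n r2),
            cl_head r1 :|: (cl_head r2 :\ b),
            cl_body r1 :\ b)].

Definition T_op d (Q : finLatticeType d) At (P : program Q At) : program Q At :=
  P :|: [set r | [exists r1 in P, exists r2 in P, exists b, gppe r1 r2 b r]].

Fixpoint Gamma d (Q : finLatticeType d) At (P : program Q At) (i : nat)
  : program Q At :=
  match i with
  | 0 => T_op P
  | i'.+1 => T_op (Gamma P i')
  end.

(* T only ever adds clauses, so the Gamma_i form an increasing chain of sets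
   of clauses.  Over finitely many atoms and a finite lattice there are only
   finitely many clauses, and a strictly increasing chain of subsets of a
   finite type has length at most its cardinality, so the chain stabilizes. *)
From mathcomp Require Import all_boot all_order.

Set Implicit Arguments.
Unset Strict Implicit.
Unset Printing Implicit Defensive.

Lemma increasing_chain_stabilizes (T : finType) (F : nat -> {set T}) :
  (forall n, F n \subset F n.+1) -> exists2 n, n <= #|T| & F n.+1 = F n.
Proof.
move=> F_incr; case: (pickP (fun n : 'I_#|T|.+1 => F n.+1 == F n)).
  by move=> n /eqP eqF; exists n; first by rewrite -ltnS.
move=> F_moves; exfalso.
have F_strict n : n <= #|T| -> F n \proper F n.+1.
  rewrite -ltnS => lt_n; rewrite properEneq F_incr andbT eq_sym.
  exact: negbT (F_moves (Ordinal lt_n)).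
have card_F n : n <= #|T|.+1 -> n <= #|F n|.
  elim: n => [|n IHn] // lt_n.
  exact: leq_ltn_trans (IHn (ltnW lt_n)) (proper_card (F_strict n lt_n)).
have := leq_trans (card_F _ (leqnn _)) (max_card (mem (F #|T|.+1))).
by rewrite ltnn.
Qed.

Lemma T_op_subset d (Q : finLatticeType d) (At : finType) (P : program Q At) :
  P \subset T_op P.
Proof. exact: subsetUl. Qed.

Lemma Gamma_subset_succ d (Q : finLatticeType d) (At : finType)
    (P : program Q At) (i : nat) :
  Gamma P i \subset Gamma P i.+1.
Proof. exact: T_op_subset. Qed.

Theorem proposition9 (d : Order.disp_t) (Q : finLatticeType d) (At : finType)
  (P : program Q At) :
  exists n : nat, 0 < n /\ Gamma P n = Gamma P n.-1.
Proof.
have [n _ fixed_n] := increasing_chain_stabilizes (Gamma_subset_succ P).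
by exists n.+1.
Qed.
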